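(* Let $\mathcal A$ be a weakly idempotent complete pre-additive category and $M$ a simplicial module in $\mathcal A$. For every $n\ge0$ the family $\{\partial_{n,i}:M_n\to M_{n-1}\}_{1\le i\le n}$ has a joint kernel $\iota:N_n(M)\to M_n$ (the ''intersection'' $\bigcap_{i=1}^n\ker\partial_{n,i}$), and the idempotent $p_n$ splits through it: there is $r:M_n\to N_n(M)$ with $r\iota=1$ and $\iota r=p_n$. Consequently $M_n\cong N_n(M)\oplus D_n(M)$ where $D_n(M)$ is the image (splitting) of $1-p_n$.
   Context: Let $\mathcal A$ be a pre-additive category. Let $\Delta$ be the category with objects $[n]$, $n\ge0$, and morphisms $[m]\to[n]$ the weakly monotone maps $f:\mathbb Z\to\mathbb Z$ with $f(j+m+1)=f(j)+n+1$, $f(0)\ge0$, $f(m)\le n$ (equivalently, weakly monotone maps $\{0,\dots,m\}\to\{0,\dots,n\}$). Let $\varepsilon^n_i:[n-1]\to[n]$ ($0\le i\le n$) skip $i$ ($\varepsilon^n_i(j)=j$ for $j<i$, $j+1$ for $j\ge i$), and $\eta^n_i:[n+1]\to[n]$ ($0\le i\le n$) repeat $i$ ($\eta^n_i(j)=j$ for $j\le i$, $j-1$ for $j>i$). A simplicial module is a functor $M:\Delta^{op}\to\mathcal A$; write $M_n=M([n])$, $\partial_{n,i}=M(\varepsilon^n_i):M_n\to M_{n-1}$, $s_{n,i}=M(\eta^n_i):M_n\to M_{n+1}$. Define $p_n=(1-s_{n-1,0}\partial_{n,1})(1-s_{n-1,1}\partial_{n,2})\cdots(1-s_{n-1,n-1}\partial_{n,n})$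 ($p_0=1$). A pre-additive category is weakly idempotent complete if every morphism $f$ admitting $g$ with $fg=1$ has a kernel. An idempotent $p$ on $A$ splits if $p=\iota r$ with $r\iota=1$. *)

From HB Require Import structures.
From mathcomp Require Import all_boot all_order all_algebra.
From mathcomp Require Import zify.
Set Implicit Arguments. Unset Strict Implicit. Unset Printing Implicit Defensive.
Import Order.TTheory GRing.Theory.
Local Open Scope ring_scope.

Record PreAdditive := {
  Obj : Type;
  Mor : Obj -> Obj -> zmodType;
  mcomp : forall A B C : Obj, Mor B C -> Mor A B -> Mor A C;
  idm : forall A : Obj, Mor A A;
  compA : forall A B C D (h : Mor C D) (g : Mor B C) (f : Mor A B),
      mcomp h (mcomp g f) = mcomp (mcomp h g) f;
  comp1l : forall A B (f : Mor A B), mcomp (idm B) f = f;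
  comp1r : forall A B (f : Mor A B), mcomp f (idm A) = f;
  compDl : forall A B C (g1 g2 : Mor B C) (f : Mor A B),
      mcomp (g1 + g2) f = mcomp g1 f + mcomp g2 f;
  compDr : forall A B C (g : Mor B C) (f1 f2 : Mor A B),
      mcomp g (f1 + f2) = mcomp g f1 + mcomp g f2
}.
Arguments Mor : clear implicits.
Arguments mcomp {_ A B C}.
Arguments idm {_}.

Definition is_kernel (C : PreAdditive) (A B K : Obj C) (f : Mor C A B) (k : Mor C K A) : Prop :=
  mcomp f k = 0 /\
  forall (X : Obj C) (h : Mor C X A), mcomp f h = 0 -> exists! u : Mor C X K, mcomp k u = h.

Definition weakly_idem_complete (C : PreAdditive) : Prop :=
  forall (A B : Obj C) (f : Mor C A B) (g : Mor C B A), mcomp f g = idm B ->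
    exists (K : Obj C) (k : Mor C K A), is_kernel f k.

(* morphisms [m] -> [n] : weakly monotone maps {0..m} -> {0..n} *)
Definition monob (m n : nat) (f : {ffun 'I_m.+1 -> 'I_n.+1}) : bool :=
  [forall i : 'I_m.+1, forall j : 'I_m.+1, (i <= j)%N ==> (f i <= f j)%N].

Definition Delta (m n : nat) := {f : {ffun 'I_m.+1 -> 'I_n.+1} | monob f}.
Definition mkDelta m n (f : {ffun 'I_m.+1 -> 'I_n.+1}) (H : monob f) : Delta m n :=
  exist (fun g => monob g) f H.

Lemma monob_id n : monob [ffun i : 'I_n.+1 => i].
Proof. by apply/forallP => i; apply/forallP => j; rewrite !ffunE; apply/implyP. Qed.

Definition delta_id n : Delta n n := mkDelta (monob_id n).

Lemma monob_comp l m n (g : Delta m n) (f : Delta l m) :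
  monob [ffun i => sval g (sval f i)].
Proof.
case: g f => g Hg [f Hf] /=.
apply/forallP => i; apply/forallP => j; rewrite !ffunE; apply/implyP => Hij.
have H1 : (f i <= f j)%N by move/forallP: Hf => /(_ i) /forallP /(_ j) /implyP; apply.
by move/forallP: Hg => /(_ (f i)) /forallP /(_ (f j)) /implyP; apply.
Qed.

Definition delta_comp l m n (g : Delta m n) (f : Delta l m) : Delta l n :=
  mkDelta (monob_comp g f).

(* coface coface^{n+1}_i : [n] -> [n+1], skipping i (j |-> j if j < i, j+1 if j >= i);
   this is exactly mathcomp's [lift i]. *)
Lemma monob_eps n (i : 'I_n.+2) : monob [ffun j : 'I_n.+1 => lift i j].
Proof.
apply/forallP => j; apply/forallP => k; rewrite !ffunE /=; apply/implyP => Hjk.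
rewrite /bump; case: (leqP i j); case: (leqP i k) => /= *; lia.
Qed.
Definition coface n (i : 'I_n.+2) : Delta n n.+1 := mkDelta (monob_eps i).

Definition eta_fun n (i : 'I_n.+1) (j : 'I_n.+2) : 'I_n.+1 :=
  inord (if (j <= i)%N then (j : nat) else (j : nat).-1).

Lemma eta_funE n (i : 'I_n.+1) (j : 'I_n.+2) :
  (eta_fun i j : nat) = if (j <= i)%N then (j : nat) else (j : nat).-1.
Proof.
rewrite /eta_fun inordK //; have := ltn_ord i; have := ltn_ord j.
case: ifP => *; lia.
Qed.

Lemma monob_eta n (i : 'I_n.+1) : monob [ffun j => eta_fun i j].
Proof.
apply/forallP => j; apply/forallP => k; rewrite !ffunE /= !eta_funE.
apply/implyP => Hjk; case: ifP; case: ifP => /= *; lia.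
Qed.
Definition codeg n (i : 'I_n.+1) : Delta n.+1 n := mkDelta (monob_eta i).

Record SimplicialModule (C : PreAdditive) := {
  Mob :> nat -> Obj C;
  Mmap : forall m n : nat, Delta m n -> Mor C (Mob n) (Mob m);
  Mmap_id : forall n, Mmap (delta_id n) = idm (Mob n);
  Mmap_comp : forall l m n (g : Delta m n) (f : Delta l m),
      Mmap (delta_comp g f) = mcomp (Mmap f) (Mmap g)
}.
Arguments Mmap {C} s {m n}.

Definition face C (M : SimplicialModule C) n (i : 'I_n.+2) : Mor C (M n.+1) (M n) :=
  Mmap M (coface i).
Definition degen C (M : SimplicialModule C) n (i : 'I_n.+1) : Mor C (M n) (M n.+1) :=
  Mmap M (codeg i).

(* p_0 = 1,  p_{k+1} = (1 - s_{k,0} d_{k+1,1}) o ... o (1 - s_{k,k} d_{k+1,k+1}) *)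
Definition p_idem C (M : SimplicialModule C) (n : nat) : Mor C (M n) (M n) :=
  match n as n0 return Mor C (M n0) (M n0) with
  | 0 => idm (M 0)
  | k.+1 => foldr (fun f acc => mcomp f acc) (idm (M k.+1))
      [seq idm (M k.+1) - mcomp (degen M i) (face M (lift ord0 i)) | i <- enum 'I_k.+1]
  end.

Definition killed_by_upper_faces C (M : SimplicialModule C) (n : nat) (X : Obj C) :
    Mor C X (M n) -> Prop :=
  match n as n0 return Mor C X (M n0) -> Prop with
  | 0 => fun _ => True
  | k.+1 => fun h => forall i : 'I_k.+2, (0 < i)%N -> mcomp (face M i) h = 0
  end.

Definition is_upper_faces_kernel C (M : SimplicialModule C) (n : nat) (K : Obj C)
    (k : Mor C K (M n)) : Prop :=
  killed_by_upper_faces k /\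
  forall (X : Obj C) (h : Mor C X (M n)), killed_by_upper_faces h ->
    exists! u : Mor C X K, mcomp k u = h.

Arguments face {C} M {n} i.
Arguments degen {C} M {n} i.
Arguments p_idem {C} M n.
Arguments killed_by_upper_faces {C} M n {X} h.
Arguments is_upper_faces_kernel {C} M n {K} k.
Arguments is_kernel {C A B K} f k.

(* Write p_n = E_0 E_1 ... E_(n-1) with E_j = 1 - s_j d_(j+1), and put
   Q_k = E_k ... E_(n-1).  By the simplicial identities Q_k is killed by d_i for
   i > k and fixes every map killed by these faces; so Q_k is idempotent, and any
   splitting of p_n = Q_0 is automatically the joint kernel of d_1, ..., d_n.
   Splittings are built by descending induction on k: Q_k = Q_(k+1) E_k Q_(k+1),
   and Q_(k+1) s_k = s_k Q'_k with Q'_k the analogous idempotent on M_(n-1),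
   split by induction on n.  Thus the image of Q'_k is a retract of the image of
   Q_(k+1), and weak idempotent completeness provides its complement, which is
   the image of Q_k. *)

From HB Require Import structures.
From mathcomp Require Import all_boot all_order all_algebra zify.
Import GRing.Theory.
Local Open Scope ring_scope.

Set Implicit Arguments. Unset Strict Implicit.

Local Notation "g ∘ f" := (mcomp g f) (at level 40, left associativity).

Section PreAdditiveCalculus.
Variable C : PreAdditive.
Implicit Types A B D X : Obj C.

Lemma comp0l A B D (f : Mor C A B) : (0 : Mor C B D) ∘ f = 0.
Proof. by apply: (addrI (0 ∘ f)); rewrite -compDl !addr0. Qed.

Lemma comp0r A B D (g : Mor C B D) : g ∘ (0 : Mor C A B) = 0.
Proof. by apply: (addrI (g ∘ 0)); rewrite -compDr !addr0. Qed.

Lemma compNl A B D (g : Mor C B D) (f : Mor C A B) : (- g) ∘ f = - (g ∘ f).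
Proof. by apply: (addrI (g ∘ f)); rewrite -compDl !subrr comp0l. Qed.

Lemma compNr A B D (g : Mor C B D) (f : Mor C A B) : g ∘ (- f) = - (g ∘ f).
Proof. by apply: (addrI (g ∘ f)); rewrite -compDr !subrr comp0r. Qed.

Lemma compBl A B D (g1 g2 : Mor C B D) (f : Mor C A B) :
  (g1 - g2) ∘ f = g1 ∘ f - g2 ∘ f.
Proof. by rewrite compDl compNl. Qed.

Lemma compBr A B D (g : Mor C B D) (f1 f2 : Mor C A B) :
  g ∘ (f1 - f2) = g ∘ f1 - g ∘ f2.
Proof. by rewrite compDr compNr. Qed.

Lemma kernel_monic A B K (f : Mor C A B) (k : Mor C K A) X (u1 u2 : Mor C X K) :
  is_kernel f k -> k ∘ u1 = k ∘ u2 -> u1 = u2.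
Proof.
case=> fk0 kernel_univ ku12.
have [u [_ u_uniq]] := kernel_univ X (k ∘ u1) ltac:(by rewrite compA fk0 comp0l).
by rewrite -(u_uniq u1) // (u_uniq u2).
Qed.

End PreAdditiveCalculus.

Section SplitIdempotents.
Variable C : PreAdditive.
Implicit Types A B D : Obj C.

Definition splits A (e : Mor C A A) : Prop :=
  exists N (i : Mor C N A) (r : Mor C A N), r ∘ i = idm N /\ i ∘ r = e.

Lemma splits_id A : splits (idm A).
Proof. by exists A, (idm A), (idm A); rewrite comp1l. Qed.

Hypothesis hC : weakly_idem_complete C.

Lemma retraction_complement A N (i : Mor C N A) (r : Mor C A N) :
  r ∘ i = idm N ->
  exists D (j : Mor C D A) (q : Mor C A D),
    q ∘ j = idm D /\ j ∘ q = idm A - i ∘ r /\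
    r ∘ j = 0 /\ q ∘ i = 0 /\ i ∘ r + j ∘ q = idm A.
Proof.
move=> ri1; have [D [j ker_j]] := hC ri1.
have [rj0 ker_univ] := ker_j.
have [q [jq _]] := ker_univ A (idm A - i ∘ r)
  ltac:(by rewrite compBr comp1r compA ri1 comp1l subrr).
have qj1 : q ∘ j = idm D.
  apply: (kernel_monic ker_j).
  by rewrite compA jq compBl comp1l -compA rj0 comp0r subr0 comp1r.
have qi0 : q ∘ i = 0.
  apply: (kernel_monic ker_j).
  by rewrite compA jq compBl comp1l -compA ri1 comp1r subrr comp0r.
by exists D, j, q; do !split; rewrite // jq addrC subrK.
Qed.

(* The retraction [r' d i] of [r s i'] has a kernel, which cuts the summand
   [s (im e')] out of [im e]. *)
Lemma splits_section_complement A B (s : Mor C B A) (d : Mor C A B)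
    (e : Mor C A A) (e' : Mor C B B) :
  splits e -> splits e' -> d ∘ s = idm B -> e ∘ s = s ∘ e' ->
  splits (e ∘ (idm A - s ∘ d) ∘ e).
Proof.
move=> [N [i [r [ri1 ir]]]] [N' [i' [r' [ri1' ir']]]] ds1 es.
have ee : e ∘ e = e by rewrite -ir -compA (compA r) ri1 comp1l.
have ese' : e ∘ s ∘ e' = e ∘ s.
  by rewrite -compA -es compA ee.
have ret : r' ∘ d ∘ i ∘ (r ∘ s ∘ i') = idm N'.
  rewrite !compA -(compA _ i r) ir -(compA _ e s) es.
  by rewrite -!compA (compA d s) ds1 comp1l -ir' -compA (compA r' i') ri1' comp1l.
have [K [k [u [uk1 [ku _]]]]] := retraction_complement ret.
exists K, (i ∘ k), (u ∘ r); split.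
  by rewrite -compA (compA r i) ri1 comp1l.
rewrite -compA (compA k) ku compBl comp1l compBr ir.
rewrite compBr comp1r compBl ee !compA.
by rewrite ir -(compA _ i' r') ir' ese' -(compA _ i r) ir.
Qed.
End SplitIdempotents.

Lemma Delta_ext m n (f g : Delta m n) :
  (forall x : 'I_m.+1, val (sval f x) = val (sval g x)) -> f = g.
Proof. by move=> fg; apply/val_inj/ffunP => x; apply/val_inj/fg. Qed.

Section SimplicialIdentities.
Variables (C : PreAdditive) (M : SimplicialModule C).

(* Faces and degeneracies with [nat] indices; [inord] sends out-of-range
   indices to 0, so the lemmas below carry range hypotheses. *)
Definition dface m i : Mor C (M m.+1) (M m) := face M (inord i : 'I_m.+2).
Definition sdegen m j : Mor C (M m) (M m.+1) := degen M (inord j : 'I_m.+1).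

Lemma face_dface m (i : 'I_m.+2) : face M i = dface m i.
Proof. by rewrite /dface inord_val. Qed.

(* Split on innermost comparisons first, so that every [if] reduces. *)
Ltac case_leq :=
  repeat match goal with
  | |- context [(?a <= ?b)%N] =>
      lazymatch a with context [leq] => fail | _ =>
      lazymatch b with context [leq] => fail | _ =>
      case: (leqP a b) => /= ? end end
  end.

Ltac simplicial_identity :=
  rewrite /dface /sdegen /face /degen -?Mmap_comp -?Mmap_id;
  congr (Mmap M _); apply: Delta_ext => x /=;
  rewrite !ffunE /= ?eta_funE /= /bump ?inordK;
  try lia; have := ltn_ord x; case_leq; lia.

Lemma face_degen_succ m j : (j <= m)%N -> dface m j.+1 ∘ sdegen m j = idm (M m).
Proof. by move=> ?; simplicial_identity. Qed.

Lemma face_degen_gt m i j : (j.+1 < i <= m.+2)%N ->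
  dface m.+1 i ∘ sdegen m.+1 j = sdegen m j ∘ dface m i.-1.
Proof. by move=> /andP[? ?]; simplicial_identity. Qed.

Lemma degen_degen_lt m j k : (k < j <= m.+1)%N ->
  sdegen m.+1 j ∘ sdegen m k = sdegen m.+1 k ∘ sdegen m j.-1.
Proof. by move=> /andP[? ?]; simplicial_identity. Qed.

Lemma face_face_lt m a b : (a < b <= m.+2)%N ->
  dface m a ∘ dface m.+1 b = dface m b.-1 ∘ dface m.+1 a.
Proof. by move=> /andP[? ?]; simplicial_identity. Qed.

End SimplicialIdentities.

Section NormalizingIdempotent.
Variables (C : PreAdditive) (M : SimplicialModule C).

Definition pfactor m j : Mor C (M m.+1) (M m.+1) := idm _ - sdegen M m j ∘ dface M m j.+1.

(* [ptail m k] is the product of the factors [k, ..., m - 1] of [p_idem M m];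
   it is the identity for [k >= m]. *)
Definition ptail m k : Mor C (M m) (M m) :=
  match m with
  | 0 => idm _
  | m'.+1 => foldr (fun f g => f ∘ g) (idm _) [seq pfactor m' j | j <- iota k (m - k)]
  end.

Lemma ptailS m k : (k <= m)%N -> ptail m.+1 k = pfactor m k ∘ ptail m.+1 k.+1.
Proof. by move=> km; rewrite /= subSn. Qed.

Lemma ptail_ge m k : (m <= k)%N -> ptail m k = idm (M m).
Proof. by case: m => // m /eqP mk; rewrite /ptail mk. Qed.

Lemma p_idem_ptail m : p_idem M m = ptail m 0.
Proof.
case: m => // m; rewrite /ptail subn0 -val_enum_ord -map_comp.
congr foldr; apply: eq_map => i /=.
by rewrite /pfactor /sdegen inord_val face_dface.
Qed.

Lemma face_pfactor_gt m k i : (k.+1 < i <= m.+2)%N ->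
  dface M m.+1 i ∘ pfactor m.+1 k = pfactor m k ∘ dface M m.+1 i.
Proof.
move=> /andP[ki im]; rewrite /pfactor compBr compBl comp1r comp1l.
by rewrite compA face_degen_gt ?ki // -compA -face_face_lt ?im ?andbT // compA.
Qed.

Lemma pfactor_degen_lt m j k : (k < j <= m.+1)%N ->
  pfactor m.+1 j ∘ sdegen M m.+1 k = sdegen M m.+1 k ∘ pfactor m j.-1.
Proof.
move=> /andP[kj jm]; rewrite /pfactor compBl compBr comp1l comp1r.
rewrite -compA face_degen_gt; last by apply/andP; split; lia.
by rewrite compA degen_degen_lt ?kj // -compA prednK //; lia.
Qed.

Lemma face_ptail m k i : (k < i <= m.+1)%N -> dface M m i ∘ ptail m.+1 k = 0.
Proof.
move Ht: (m.+1 - k)%N => t; elim: t k Ht => [|t IH] k Ht /andP[ki im]; first lia.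
rewrite ptailS; last lia.
have [->|ik] := eqVneq i k.+1.
  by rewrite compA /pfactor compBr comp1r compA face_degen_succ ?comp1l ?subrr ?comp0l //; lia.
case: m Ht im IH => [|m] Ht im IH; first lia.
rewrite compA face_pfactor_gt; last by apply/andP; split; lia.
by rewrite -compA IH ?comp0r //; [lia | apply/andP; split; lia].
Qed.

Lemma ptail_fix m k X (h : Mor C X (M m.+1)) :
  (forall i, (k < i <= m.+1)%N -> dface M m i ∘ h = 0) -> ptail m.+1 k ∘ h = h.
Proof.
move Ht: (m.+1 - k)%N => t; elim: t k Ht => [|t IH] k Ht dh0.
  by rewrite ptail_ge ?comp1l //; lia.
rewrite ptailS; last lia.
rewrite -compA IH; [|lia | by move=> i /andP[ki im]; apply: dh0; lia].
by rewrite /pfactor compBl comp1l -compA dh0 ?comp0r ?subr0 //; lia.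
Qed.

Lemma ptail_succK m k : (k <= m)%N -> ptail m.+1 k.+1 ∘ ptail m.+1 k = ptail m.+1 k.
Proof. by move=> km; apply: ptail_fix => i /andP[ki im]; apply: face_ptail; lia. Qed.

Lemma ptail_degen m j k : (k < j <= m.+1)%N ->
  ptail m.+1 j ∘ sdegen M m k = sdegen M m k ∘ ptail m j.-1.
Proof.
move Ht: (m.+1 - j)%N => t; elim: t j Ht => [|t IH] j Ht /andP[kj jm].
  by rewrite !ptail_ge ?comp1l ?comp1r //; lia.
case: m Ht jm IH => [|m] Ht jm IH; first lia.
rewrite ptailS; last lia.
rewrite -compA IH; [|lia | apply/andP; split; lia].
rewrite compA pfactor_degen_lt; last by apply/andP; split; lia.
by rewrite -compA [in RHS]ptailS ?prednK //; lia.
Qed.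
End NormalizingIdempotent.

Lemma ptail_splits C (M : SimplicialModule C) (hC : weakly_idem_complete C) m k :
  splits (ptail M m k).
Proof.
elim: m k => [|m IHm] k; first exact: splits_id.
move Ht: (m.+1 - k)%N => t; elim: t k Ht => [|t IH] k Ht.
  by rewrite ptail_ge; [exact: splits_id | lia].
have km : (k <= m)%N by lia.
have kSm : (k < k.+1 <= m.+1)%N by rewrite ltnSn.
have := splits_section_complement hC (IH k.+1 ltac:(lia)) (IHm k)
  (face_degen_succ M km) (ptail_degen M kSm).
by rewrite -compA -/(pfactor M m k) -ptailS // ptail_succK.
Qed.

Section UpperFacesKernel.
Variables (C : PreAdditive) (M : SimplicialModule C).

Lemma killed_by_upper_faces_comp n X Y (h : Mor C Y (M n)) (g : Mor C X Y) :
  killed_by_upper_faces M n h -> killed_by_upper_faces M n (h ∘ g).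
Proof. by case: n h => // m h hk i i0; rewrite compA hk ?comp0l. Qed.

Lemma killed_by_upper_faces_p_idem n : killed_by_upper_faces M n (p_idem M n).
Proof.
case: n => // m i i0; rewrite face_dface p_idem_ptail face_ptail //.
by rewrite i0 -ltnS ltn_ord.
Qed.

Lemma p_idem_fix n X (h : Mor C X (M n)) :
  killed_by_upper_faces M n h -> p_idem M n ∘ h = h.
Proof.
case: n h => [|m] h hk; first exact: comp1l.
rewrite p_idem_ptail ptail_fix // => i /andP[i0 im].
by have := hk (inord i); rewrite face_dface inordK //; apply.
Qed.

Lemma split_p_idem_kernel n N (i : Mor C N (M n)) (r : Mor C (M n) N) :
  r ∘ i = idm N -> i ∘ r = p_idem M n -> is_upper_faces_kernel M n i.
Proof.
move=> ri1 ir; split.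
  have -> : i = p_idem M n ∘ i by rewrite -ir -compA ri1 comp1r.
  exact/killed_by_upper_faces_comp/killed_by_upper_faces_p_idem.
move=> X h hk; exists (r ∘ h); split; first by rewrite compA ir p_idem_fix.
by move=> v <-; rewrite compA ri1 comp1l.
Qed.
End UpperFacesKernel.

Unset Implicit Arguments. Set Strict Implicit.

Theorem mainTheorem3 (C : PreAdditive) (hC : weakly_idem_complete C)
    (M : SimplicialModule C) (n : nat) :
  exists (N : Obj C) (iota : Mor C N (M n)) (r : Mor C (M n) N),
    is_upper_faces_kernel M n iota /\
    mcomp r iota = idm N /\ mcomp iota r = p_idem M n /\
    exists (D : Obj C) (j : Mor C D (M n)) (q : Mor C (M n) D),
      mcomp q j = idm D /\ mcomp j q = idm (M n) - p_idem M n /\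
      mcomp r j = 0 /\ mcomp q iota = 0 /\
      mcomp iota r + mcomp j q = idm (M n).
Proof.
have [N [i [r [ri1 ir]]]] := ptail_splits M hC n 0.
rewrite -p_idem_ptail in ir.
exists N, i, r; split; first exact: split_p_idem_kernel ri1 ir.
by rewrite -ir; split=> //; split=> //; apply: retraction_complement.
Qed.
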